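(* Let $c_0,c_1$ be real constants with $c_0\ge\max\{c_1,-3c_1\}$, let $M\ge2$, and let $\{v_j\}_{j=0}^{M}$ be any real sequence. Put $$A=\frac12\sqrt{\frac{c_0-c_1}{2}}+\frac12\sqrt{\frac{c_0+3c_1}{2}},\qquad B=\sqrt{\frac{c_0-c_1}{2}},\qquad E_j=A^2v_j^2+\left(Bv_j-Av_{j-1}\right)^2,\ j=1,\dots,M.$$ Then for every $j=1,\dots,M-1$, $$v_{j+1}\left(c_0v_{j+1}-(c_0-c_1)v_j-c_1v_{j-1}\right)\ge E_{j+1}-E_j.$$ *)

From Stdlib Require Import Reals Lra.
Open Scope R_scope.

Definition coefA (c0 c1 : R) : R :=
  / 2 * sqrt ((c0 - c1) / 2) + / 2 * sqrt ((c0 + 3 * c1) / 2).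

Definition coefB (c0 c1 : R) : R := sqrt ((c0 - c1) / 2).

(* E_j = A^2 v_j^2 + (B v_j - A v_{j-1})^2, meaningful for j >= 1 *)
Definition Eseq (c0 c1 : R) (v : nat -> R) (j : nat) : R :=
  (coefA c0 c1)^2 * (v j)^2 + (coefB c0 c1 * v j - coefA c0 c1 * v (j - 1)%nat)^2.

From Stdlib Require Import Reals Lra Lia.
Open Scope R_scope.

(* Writing [c0 - c1 = 2 a^2] and [c0 + 3 c1 = 2 b^2] (possible exactly when
   [c0 >= max c1 (-3 c1)]), one has [A = (a + b) / 2] and [B = a], and the
   left-hand side minus [E_(j+1) - E_j] is the perfect square
   [((a - b)/2 v_(j+1) - a v_j + (a + b)/2 v_(j-1))^2]. *)

Lemma energy_increment_sq (c0 c1 a b x y z : R) :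
  c0 - c1 = 2 * a ^ 2 -> c0 + 3 * c1 = 2 * b ^ 2 ->
  let A := / 2 * a + / 2 * b in
  x * (c0 * x - (c0 - c1) * y - c1 * z)
  - ((A ^ 2 * x ^ 2 + (a * x - A * y) ^ 2) - (A ^ 2 * y ^ 2 + (a * y - A * z) ^ 2))
  = ((a - b) / 2 * x - a * y + (a + b) / 2 * z) ^ 2.
Proof.
  intros Ha Hb A; unfold A.
  replace c0 with ((3 * a ^ 2 + b ^ 2) / 2) by lra.
  replace c1 with ((b ^ 2 - a ^ 2) / 2) by lra.
  field.
Qed.

Lemma energy_increment_le (c0 c1 a b x y z : R) :
  c0 - c1 = 2 * a ^ 2 -> c0 + 3 * c1 = 2 * b ^ 2 ->
  let A := / 2 * a + / 2 * b in
  (A ^ 2 * x ^ 2 + (a * x - A * y) ^ 2) - (A ^ 2 * y ^ 2 + (a * y - A * z) ^ 2)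
  <= x * (c0 * x - (c0 - c1) * y - c1 * z).
Proof.
  intros Ha Hb A.
  pose proof (energy_increment_sq c0 c1 a b x y z Ha Hb) as E.
  pose proof (pow2_ge_0 ((a - b) / 2 * x - a * y + (a + b) / 2 * z)).
  cbv zeta in E; unfold A; lra.
Qed.

Lemma sqrt_half_sq (t : R) : 0 <= t -> t = 2 * sqrt (t / 2) ^ 2.
Proof. intros Ht; rewrite pow2_sqrt; lra. Qed.

Theorem lemma4 (c0 c1 : R) (M : nat) (v : nat -> R)
  (Hc0 : c0 >= Rmax c1 (-3 * c1)) (HM : (2 <= M)%nat) :
  forall j : nat, (1 <= j)%nat -> (j <= M - 1)%nat ->
    v (S j) * (c0 * v (S j) - (c0 - c1) * v j - c1 * v (j - 1)%nat)
      >= Eseq c0 c1 v (S j) - Eseq c0 c1 v j.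
Proof.
  intros j _ _.
  pose proof (Rmax_l c1 (-3 * c1)); pose proof (Rmax_r c1 (-3 * c1)).
  apply Rle_ge; unfold Eseq, coefA, coefB.
  replace (S j - 1)%nat with j by lia.
  apply energy_increment_le; apply sqrt_half_sq; lra.
Qed.
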